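(* Let $G$ be a transitive permutation group on a finite set $\Omega$ of size $n\ge2$. For $g\in G$ let $c(g)$ be the number of cycles (including fixed points) in the disjoint cycle decomposition of $g$, let $\ell(g)$ be the length of the shortest cycle of odd length in that decomposition ($\ell(g)=0$ if there is none), and for $i\ge0$ let $\mathcal{O}_i$ be the set of $g\in G$ whose cycle decomposition contains at most $i$ cycles of odd length. Let $r(G)$ be the number of orbits of $G$ on the set $\binom{\Omega}{\lfloor n/2\rfloor}$ of $\lfloor n/2\rfloor$-subsets of $\Omega$, and for $A\subseteq\Omega$ let $G_A$ be its setwise stabiliser. Suppose $\mathbf{m}(G)=\lceil(n+1)/2\rceil$. If $n$ is even, then \[ r(G)|G|=\sum_{A\in\binom{\Omega}{n/2}}|G_A|=\sum_{g\in\mathcal{O}_0}2^{c(g)}, \] and if $n$ is odd, then \[ r(G)|G|=\sum_{A\in\binom{\Omega}{\lfloor n/2\rfloor}}|G_A|\le\sum_{g\in\mathcal{O}_1}2^{c(g)-1}\ell(g)\le\left\lceil\frac n2\right\rceil\sum_{A\in\binom{\Omega}{\lfloor n/2\rfloor}}|G_A|=\left\lceil\frac n2\right\rceil r(G)|G|. \]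
   Context: A subset $A\subseteq\Omega$ is self-separable for $G$ if there exists $g\in G$ with $A\cap A^g=\emptyset$; $\mathbf{m}(G)$ is the minimum cardinality of a subset of $\Omega$ that is not self-separable for $G$. *)

From mathcomp Require Import all_boot all_fingroup.
Set Implicit Arguments. Unset Strict Implicit. Unset Printing Implicit Defensive.
Local Open Scope group_scope.

Section Defs.
Variable T : finType.
Implicit Types (G : {group {perm T}}) (A : {set T}) (g : {perm T}).

Definition self_separable G A : bool :=
  [exists g in G, [disjoint A & [set g x | x in A]]].

(* m(G): the minimum cardinality of a subset of T that is not self-separable
   (the whole set T is never self-separable when T is nonempty, so the
   default value #|T| of the minimum is only reached in that case). *)
Definition mG G : nat :=
  \big[minn/#|T|]_(A : {set T} | ~~ self_separable G A) #|A|.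

Definition ncycles g : nat := #|porbits g|.

Definition odd_cycles g : {set {set T}} := [set X in porbits g | odd #|X|].

Definition ell g : nat :=
  if odd_cycles g == set0 then 0
  else \big[minn/#|T|]_(X in odd_cycles g) #|X|.

Definition O_set G (i : nat) : {set {perm T}} :=
  [set g in G | #|odd_cycles g| <= i].

Definition ksubsets (k : nat) : {set {set T}} := [set A : {set T} | #|A| == k].

Definition rG G : nat :=
  #|[set orbit ('P^*)%act G A | A in ksubsets #|T|./2]|.

End Defs.

From mathcomp Require Import all_boot all_fingroup.
From mathcomp Require Import zify.
Set Implicit Arguments. Unset Strict Implicit. Unset Printing Implicit Defensive.

(* Orbit counting gives r(G)|G| = sum_A |G_A| over the floor(n/2)-subsets A, and
   m(G) = ceil((n+1)/2) exceeds floor(n/2), so every such A is self-separable.  The elements g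
   with A and A^g disjoint then contain a coset of G_A; for n even they are exactly that coset
   (A^g must be the complement of A), for n odd they lie in the ceil(n/2) cosets sending A onto
   the complement of A minus a point.  Counting the pairs (A, g) by g instead: A is separated by
   g iff membership in A flips from y to g y at every y except the (n mod 2) gap points outside
   A with g y outside A.  Such flip patterns exist iff every cycle of g carries an even number
   of flips, and then there are 2^c(g) of them, half of which avoid a given point. *)

Section JumpSets.
Variables (T : finType) (g : {perm T}).

Definition jump_sets (c : pred T) : {set {set T}} :=
  [set A : {set T} | [forall y, (g y \in A) == (y \in A) (+) c y]].

Definition symdiff (A B : {set T}) : {set T} := [set y | (y \in A) (+) (y \in B)].

Lemma symdiffK B : involutive (symdiff^~ B).
Proof. by move=> A; apply/setP=> y; rewrite !inE addbK. Qed.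

Lemma jump_setsP c (A : {set T}) :
  reflect (forall y, (g y \in A) = (y \in A) (+) c y) (A \in jump_sets c).
Proof. by rewrite inE; apply: (iffP forallP) => jA y; [apply/eqP | rewrite jA]. Qed.

Lemma jump_sets_symdiff c c1 c2 (A B : {set T}) :
  B \in jump_sets c -> (forall y, c2 y = c1 y (+) c y) ->
  (symdiff A B \in jump_sets c2) = (A \in jump_sets c1).
Proof.
move=> /jump_setsP jB c12; apply/jump_setsP/jump_setsP => jA y.
  by move: (jA y); rewrite !inE jB c12; case: (y \in A) (y \in B) (g y \in A) (c y) (c1 y)
    => [] [] [] [] [].
by rewrite !inE jA jB c12; case: (y \in A) (y \in B) (c y) (c1 y) => [] [] [] [].
Qed.

Lemma card_jump_sets_shift c (A0 : {set T}) :
  A0 \in jump_sets c -> #|jump_sets c| = #|jump_sets pred0|.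
Proof.
move=> jA0; rewrite -(card_imset _ (can_inj (symdiffK A0))).
rewrite (can_imset_pre _ (symdiffK A0)); apply: eq_card => A.
by rewrite inE (jump_sets_symdiff (c1 := pred0) _ jA0).
Qed.

Lemma porbit_permS y : porbit g (g y) = porbit g y.
Proof. by rewrite -[in LHS](expg1 g) porbit_perm. Qed.

Lemma porbitS x y : (g y \in porbit g x) = (y \in porbit g x).
Proof. by rewrite -!eq_porbit_mem porbit_permS. Qed.

Lemma porbit_jump_sets0 x : porbit g x \in jump_sets pred0.
Proof. by apply/jump_setsP => y; rewrite porbitS addbF. Qed.

Lemma mem_jump_sets0 (A : {set T}) x y :
  A \in jump_sets pred0 -> y \in porbit g x -> (y \in A) = (x \in A).
Proof.
move=> /jump_setsP jA /porbitP[i ->]; elim: i => [|i IHi]; first by rewrite expg0 perm1.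
by rewrite expgSr permM jA addbF.
Qed.

Lemma cover_porbits_sub (P : {set {set T}}) :
  P \subset porbits g -> [set X in porbits g | X \subset cover P] = P.
Proof.
move=> sPg; apply/setP => X; rewrite inE; apply/andP/idP => [[/imsetP[x _ ->] sXP]|PX].
  have /bigcupP[Y PY xY] := subsetP sXP x (porbit_id g x).
  have /imsetP[y _ defY] := subsetP sPg Y PY.
  by move: xY; rewrite defY -eq_porbit_mem => /eqP->; rewrite -defY.
by split; [apply: subsetP PX | apply: bigcup_sup].
Qed.

Lemma card_jump_sets0 : #|jump_sets pred0| = 2 ^ #|porbits g|.
Proof.
have cover_inj : {in powerset (porbits g) &, injective cover}.
  move=> P1 P2; rewrite !inE => sP1 sP2 eqP12.
  by rewrite -(cover_porbits_sub sP1) -(cover_porbits_sub sP2) eqP12.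
rewrite -card_powerset -(card_in_imset cover_inj); apply: eq_card => A.
apply/idP/imsetP => [jA | [P sPg ->]].
  exists [set X in porbits g | X \subset A].
    by rewrite inE; apply/subsetP => X; rewrite inE => /andP[].
  apply/setP => y; apply/idP/bigcupP => [Ay | [X]]; last first.
    by rewrite inE => /andP[_ /subsetP]; apply.
  exists (porbit g y); last exact: porbit_id.
  rewrite inE imset_f //=; apply/subsetP => z zy.
  by rewrite (mem_jump_sets0 jA zy).
apply/jump_setsP => y; rewrite addbF.
have porbitsS X : X \in P -> (g y \in X) = (y \in X).
  by rewrite powersetE in sPg; move=> /(subsetP sPg)/imsetP[x _ ->]; rewrite porbitS.
apply/bigcupP/bigcupP => -[X PX yX]; exists X => //.
  by rewrite -(porbitsS X PX).
by rewrite (porbitsS X PX).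
Qed.

Lemma odd_card_symdiff (A B : {set T}) :
  odd #|symdiff A B| = odd #|A| (+) odd #|B|.
Proof.
have -> : symdiff A B = (A :\: B) :|: (B :\: A).
  by apply/setP => y; rewrite !inE; case: (y \in A) (y \in B) => [] [].
rewrite cardsU (_ : _ :&: _ = set0) ?cards0 ?subn0; last first.
  by apply/setP => y; rewrite !inE; case: (y \in A) (y \in B) => [] [].
rewrite -(cardsID B A) -(cardsID A B) setIC !oddD.
by case: (odd #|B :&: A|) (odd #|A :\: B|) (odd #|B :\: A|) => [] [] [].
Qed.

Lemma jump_sets_even_cycle c (A : {set T}) x :
  A \in jump_sets c -> ~~ odd #|[set y in porbit g x | c y]|.
Proof.
move=> /jump_setsP jA; set X := porbit g x.
have -> : [set y in X | c y] = symdiff (X :&: A) (g @^-1: (X :&: A)).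
  apply/setP => y; rewrite !inE porbitS jA.
  by case: (y \in X) (y \in A) (c y) => [] [] [].
by rewrite odd_card_symdiff (card_preimset _ (@perm_inj _ g)) addbb.
Qed.

Lemma sum_iter_porbit (c : pred T) x :
  \sum_(j < #|porbit g x|) c (iter j g x) = #|[set y in porbit g x | c y]|.
Proof.
rewrite -[RHS]sum1_card (eq_bigl (fun y => (y \in traject g x #|porbit g x|) && c y));
  last by move=> y; rewrite inE -porbit_traject.
rewrite big_mkcondr -big_uniq ?uniq_traject_porbit //.
by rewrite (big_nth x) size_traject big_mkord; apply: eq_bigr => j _; rewrite nth_traject.
Qed.

Lemma index_iter_porbit x i : i < #|porbit g x| ->
  index (iter i g x) (traject g x #|porbit g x|) = i.
Proof.
by move=> lti; rewrite -(nth_traject _ lti) index_uniq ?size_traject ?uniq_traject_porbit.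
Qed.

Let rep x := odflt x [pick y in porbit g x].
Let pos y := index y (traject g (rep y) #|porbit g y|).

Lemma porbit_rep x : porbit g (rep x) = porbit g x.
Proof.
rewrite /rep; case: pickP => [y yx | /(_ x)]; last by rewrite porbit_id.
by apply/eqP; rewrite eq_porbit_mem.
Qed.

Lemma rep_perm y : rep (g y) = rep y.
Proof.
have: g y \in porbit g y by rewrite porbitS porbit_id.
rewrite -eq_porbit_mem /rep => /eqP->.
by case: pickP => //= /(_ y); rewrite porbit_id.
Qed.

Lemma pos_lt y : pos y < #|porbit g y|.
Proof.
rewrite -[X in _ < X](size_traject g (rep y)) index_mem.
by rewrite -[in X in traject _ _ X]porbit_rep -porbit_traject porbit_rep porbit_id.
Qed.

Lemma iter_pos y : iter (pos y) g (rep y) = y.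
Proof. by rewrite -(nth_traject _ (pos_lt y)) nth_index // -index_mem size_traject pos_lt. Qed.

Lemma pos_perm y :
  pos (g y) = if (pos y).+1 == #|porbit g y| then 0 else (pos y).+1.
Proof.
have gyE : g y = iter (pos y).+1 g (rep y) by rewrite iterS iter_pos.
rewrite {1}/pos rep_perm porbit_permS -(porbit_rep y) gyE.
case: eqP => [L_eq | /eqP neL]; last first.
  by rewrite index_iter_porbit // ltn_neqAle neL porbit_rep pos_lt.
rewrite L_eq iter_porbit; have := card_porbit_neq0 g (rep y).
by case: #|porbit g (rep y)| => //= n _; rewrite eqxx.
Qed.

(* Put y in A iff c holds an odd number of times on the cycle of y, from a fixed
   representative up to y; the parity hypothesis makes this consistent on wrapping around. *)
Lemma jump_sets_exists c :
  (forall x, ~~ odd #|[set y in porbit g x | c y]|) -> exists A, A \in jump_sets c.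
Proof.
move=> even_c; exists [set y | odd (\sum_(j < pos y) c (iter j g (rep y)))].
apply/jump_setsP => y; rewrite !inE pos_perm rep_perm.
case: ifP => [/eqP L_eq | _]; last by rewrite big_ord_recr /= oddD iter_pos oddb.
have := even_c (rep y); rewrite -sum_iter_porbit porbit_rep -L_eq.
by rewrite big_ord_recr big_ord0 /= oddD iter_pos oddb; case: odd; case: (c y).
Qed.

Lemma card_jump_sets c : #|jump_sets c| =
  if [forall x, ~~ odd #|[set y in porbit g x | c y]|] then 2 ^ #|porbits g| else 0.
Proof.
case: forallP => [even_c | odd_c].
  have [A0 jA0] := jump_sets_exists even_c.
  by rewrite (card_jump_sets_shift jA0) card_jump_sets0.
apply/eqP; rewrite cards_eq0; apply/eqP/setP => A; rewrite in_set0.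
by apply/negP => jA; apply: odd_c => x; apply: jump_sets_even_cycle jA.
Qed.

(* Toggling the whole cycle of y0 preserves jump sets and moves y0 in or out. *)
Lemma card_jump_sets_notin c y0 :
  #|jump_sets c| = #|[set A in jump_sets c | y0 \notin A]|.*2.
Proof.
set B := [set A : {set T} | y0 \notin A].
have toggleK := symdiffK (porbit g y0).
have toggle_out : (symdiff^~ (porbit g y0)) @: (jump_sets c :\: B) = jump_sets c :&: B.
  rewrite (can_imset_pre _ toggleK); apply/setP => A; rewrite inE in_setD in_setI andbC.
  rewrite (jump_sets_symdiff (c1 := c) _ (porbit_jump_sets0 y0)) => [|y]; last by rewrite addbF.
  by congr (_ && _); rewrite !inE porbit_id addbT negbK.
have -> : [set A in jump_sets c | y0 \notin A] = jump_sets c :&: B.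
  by apply/setP => A; rewrite !inE.
by rewrite -(cardsID B) -toggle_out card_imset ?addnn //; apply: can_inj toggleK.
Qed.
End JumpSets.

Lemma card_set_sum (U : finType) (P : pred U) : #|[set x | P x]| = \sum_x P x.
Proof. by rewrite -sum1dep_card big_mkcond. Qed.

Lemma card_in_set_sum (U : finType) (B : {set U}) (P : pred U) :
  #|[set x in B | P x]| = \sum_(x in B) P x.
Proof. by rewrite card_set_sum [RHS]big_mkcond; apply: eq_bigr => x _; case: (x \in B). Qed.

Lemma bigmin_leq_cond (I : finType) (P : pred I) (F : I -> nat) x i0 :
  P i0 -> \big[minn/x]_(i | P i) F i <= F i0.
Proof.
move=> Pi0; rewrite unlock; have : i0 \in index_enum I by rewrite mem_index_enum.
elim: (index_enum I) => //= i s IHs; rewrite inE => /predU1P[<- | /IHs le_s].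
  by rewrite Pi0 geq_minl.
by case: (P i) => //; apply: leq_trans (geq_minr _ _) le_s.
Qed.

Lemma card_set1_eq (U : finType) (B : {set U}) : #|[set y | B == [set y]]| = (#|B| == 1).
Proof.
case: cards1P => [[z ->] | not1]; last first.
  apply/eqP; rewrite cards_eq0; apply/eqP/setP => y; rewrite !inE.
  by apply/negP => /eqP B1; apply: not1; exists y.
rewrite (_ : [set y | _] = [set z]) ?cards1 //.
by apply/setP => y; rewrite !inE eq_sym; apply/eqP/eqP => [/set1_inj | ->].
Qed.

Section OddCycles.
Variables (T : finType) (g : {perm T}).

Lemma odd_porbit x : odd #|porbit g x| = (porbit g x \in odd_cycles g).
Proof. by rewrite inE imset_f. Qed.

Lemma odd_cycles_eq0 : (odd_cycles g == set0) = [forall x, ~~ odd #|porbit g x|].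
Proof.
apply/eqP/forallP => [oc0 x | even_g]; first by rewrite odd_porbit oc0 in_set0.
apply/setP => X; rewrite in_set0 inE; apply/negbTE/andP => -[/imsetP[x _ ->]].
exact/negP/even_g.
Qed.

Lemma odd_cycles_eq1 y0 :
  (odd_cycles g == [set porbit g y0]) = [forall x, ~~ odd #|porbit g x :\ y0|].
Proof.
have oddD1 x : odd #|porbit g x| = (y0 \in porbit g x) (+) odd #|porbit g x :\ y0|.
  by rewrite (cardsD1 y0) oddD oddb.
apply/eqP/forallP => [oc x | even_x].
  have := odd_porbit x; rewrite oc inE eq_porbit_mem porbit_sym oddD1.
  by case: (y0 \in _) (odd _) => [] [].
apply/setP => X; rewrite !inE; case: (boolP (X \in porbits g)) => [/imsetP[x _ ->] | nX] /=.
  rewrite eq_porbit_mem porbit_sym oddD1.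
  by move: (even_x x); case: (odd _) (y0 \in _) => [] [].
by apply/esym/eqP => XE; apply: (negP nX); rewrite XE imset_f.
Qed.

Lemma ell_set1 X : odd_cycles g = [set X] -> ell g = #|X|.
Proof.
rewrite /ell => ->; case: eqP => [/setP/(_ X) | _]; first by rewrite set11 in_set0.
by rewrite big_set1E; apply/minn_idPl; apply: max_card.
Qed.

Lemma sum_single_odd_cycle m :
  \sum_y0 (if odd_cycles g == [set porbit g y0] then m else 0) =
  if #|odd_cycles g| <= 1 then m * ell g else 0.
Proof.
case: (boolP (#|odd_cycles g| == 1)) => [/cards1P[X oc] | not1].
  have := set11 X; rewrite -oc inE => /andP[/imsetP[x _ XE] _].
  rewrite oc cards1 (ell_set1 oc) mulnC -sum_nat_const [RHS]big_mkcond /=.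
  apply: eq_bigr => y _; congr (if _ then _ else _).
  apply/eqP/idP => [/set1_inj-> | yX]; first exact: porbit_id.
  by rewrite XE; congr [set _]; apply/esym/eqP; rewrite eq_porbit_mem -XE.
rewrite big1 => [|y _]; last by case: eqP => // oc; move: not1; rewrite oc cards1.
case: leqP => // le1; have : #|odd_cycles g| == 0 by lia.
by rewrite cards_eq0 /ell => /eqP->; rewrite eqxx muln0.
Qed.

End OddCycles.

Section Separation.
Variables (T : finType) (g : {perm T}).

Definition separates (A : {set T}) : bool := [disjoint A & [set g x | x in A]].

Definition gaps (A : {set T}) : {set T} := [set y | (y \notin A) && (g y \notin A)].

Lemma separatesP (A : {set T}) : reflect (forall y, y \in A -> g y \notin A) (separates A).
Proof.
rewrite /separates disjoints_subset; apply: (iffP subsetP) => sA y yA.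
  by apply/negP => gyA; have := sA _ gyA; rewrite inE imset_f.
by rewrite inE; apply/imsetP => -[x xA yE]; have := sA _ xA; rewrite -yE yA.
Qed.

Lemma card_gaps (A : {set T}) : separates A -> #|gaps A| + #|A|.*2 = #|T|.
Proof.
move=> /separatesP sA.
have AgA : A :&: g @^-1: A = set0.
  by apply/setP => y; rewrite !inE; apply/negP => /andP[/sA/negPf-> ].
have -> : gaps A = ~: (A :|: g @^-1: A) by apply/setP => y; rewrite !inE negb_or.
rewrite -(cardsC (A :|: g @^-1: A)) cardsU AgA cards0 subn0.
by rewrite (card_preimset _ (@perm_inj _ g)) addnn addnC.
Qed.

Lemma half_separatesE (A : {set T}) :
  (#|A| == #|T|./2) && separates A = separates A && (#|gaps A| == odd #|T|).
Proof.
rewrite andbC; case sA: (separates A) => //=.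
have := card_gaps sA; have := odd_double_half #|T|.
by case: (odd #|T|) => /= nE gE; apply/eqP/eqP; lia.
Qed.

Lemma separates_gapsE (A B : {set T}) :
  separates A && (gaps A == B) = [disjoint A & B] && (A \in jump_sets g (fun y => y \notin B)).
Proof.
rewrite disjoints_subset.
apply/andP/andP => [[/separatesP sA /eqP <-] | [/subsetP AB /jump_setsP jA]].
  split; first by apply/subsetP => y yA; rewrite !inE yA.
  apply/jump_setsP => y; rewrite inE; case yA: (y \in A) => /=; last by rewrite negbK.
  by rewrite (negbTE (sA y yA)).
have nB y : y \in A -> y \notin B by move=> /AB; rewrite inE.
split; first by apply/separatesP => y yA; rewrite jA yA /= negbK; apply: nB.
apply/eqP/setP => y; rewrite inE jA; case yA: (y \in A) => /=; last by rewrite negbK.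
by rewrite (negbTE (nB y yA)).
Qed.

Lemma card_jump_sets_compl (B : {set T}) :
  #|jump_sets g (fun y => y \notin B)| =
  if [forall x, ~~ odd #|porbit g x :\: B|] then 2 ^ ncycles g else 0.
Proof.
rewrite card_jump_sets; congr (if _ then _ else _); apply/eq_forallb => x.
by rewrite (_ : [set y in _ | _] = porbit g x :\: B) //; apply/setP => y; rewrite !inE andbC.
Qed.

Lemma card_separated_even : ~~ odd #|T| ->
  #|[set A in ksubsets T #|T|./2 | separates A]| =
  if odd_cycles g == set0 then 2 ^ ncycles g else 0.
Proof.
move=> even_T; rewrite odd_cycles_eq0.
have -> : [forall x, ~~ odd #|porbit g x|] = [forall x, ~~ odd #|porbit g x :\: set0|].
  by apply/eq_forallb => x; rewrite setD0.
rewrite -card_jump_sets_compl; apply: eq_card => A.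
rewrite [LHS]in_set [A \in ksubsets _ _]inE half_separatesE (negbTE even_T) cards_eq0.
by rewrite separates_gapsE disjoints_subset setC0 subsetT.
Qed.

Lemma card_separated_gap1 y0 :
  #|[set A | separates A && (gaps A == [set y0])]| =
  if odd_cycles g == [set porbit g y0] then 2 ^ (ncycles g - 1) else 0.
Proof.
have -> : [set A | separates A && (gaps A == [set y0])] =
          [set A in jump_sets g (fun y => y \notin [set y0]) | y0 \notin A].
  apply/setP => A; rewrite [LHS]in_set [RHS]in_set separates_gapsE.
  by rewrite disjoint_sym disjoints1 andbC.
have := card_jump_sets_notin g (fun y => y \notin [set y0]) y0.
rewrite card_jump_sets_compl -odd_cycles_eq1.
case: ifP => _; last by move/esym/eqP; rewrite double_eq0 => /eqP.
have : 0 < ncycles g by apply/card_gt0P; exists (porbit g y0); apply: imset_f.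
by case: (ncycles g) => // k _; rewrite expnS subSS subn0 mul2n => /double_inj.
Qed.

Lemma card_separated_odd : odd #|T| ->
  #|[set A in ksubsets T #|T|./2 | separates A]| =
  if #|odd_cycles g| <= 1 then 2 ^ (ncycles g - 1) * ell g else 0.
Proof.
move=> odd_T; rewrite -sum_single_odd_cycle -(eq_bigr _ (fun y0 _ => card_separated_gap1 y0)).
rewrite (eq_bigr _ (fun y0 _ => card_set_sum _)) exchange_big /= card_set_sum.
apply: eq_bigr => A _; rewrite [A \in ksubsets _ _]inE half_separatesE odd_T.
by case: (separates A) => /=; [rewrite -card_set_sum card_set1_eq | rewrite big1].
Qed.

End Separation.

Section SetStabilisers.
Variables (T : finType) (G : {group {perm T}}).
Local Open Scope group_scope.

Lemma sum_card_setstab k :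
  (\sum_(A in ksubsets T k) #|'N_G(A | 'P)| = #|orbit 'P^* G @: ksubsets T k| * #|G|)%N.
Proof.
have actsK : [acts G, on ksubsets T k | 'P^*].
  by apply/actsP => a _ A; rewrite !inE card_setact.
have cardN A : #|'N_G(A | 'P)| = \sum_(a in G | 'P^*%act A a == A) 1.
  rewrite -astab1_set -sum1_card; apply: eq_bigl => a.
  by rewrite in_setI; congr (_ && _); apply/astab1P/eqP.
have cardFix a : #|'Fix_(ksubsets T k | 'P^*)[a]| = \sum_(A in ksubsets T k | 'P^*%act A a == A) 1.
  rewrite -sum1_card; apply: eq_bigl => A.
  by rewrite in_setI; congr (_ && _); apply/afix1P/eqP.
rewrite -(Frobenius_Cauchy actsK) (eq_bigr _ (fun A _ => cardN A)).
rewrite (exchange_big_dep (mem G)) /= => [|A a _ /andP[] //].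
by apply: eq_bigr => a Ga; rewrite cardFix; apply: eq_bigl => A; rewrite Ga.
Qed.

Lemma card_transporters (A : {set T}) g0 : g0 \in G ->
  #|[set g in G | [set g x | x in A] == [set g0 x | x in A]]| = #|'N_G(A | 'P)|.
Proof.
move=> Gg0; have := @amove_act _ _ _ 'P^* G A (subsetT _) g0 Gg0.
by rewrite /amove /= => ->; rewrite card_rcoset astab1_set.
Qed.

Lemma card_transporters_le (A B : {set T}) :
  #|[set g in G | [set g x | x in A] == B]| <= #|'N_G(A | 'P)|.
Proof.
have [-> | [g0]] := set_0Vmem [set g in G | [set g x | x in A] == B]; first by rewrite cards0.
by rewrite inE => /andP[Gg0 /eqP <-]; rewrite (card_transporters A Gg0).
Qed.

Definition separating (A : {set T}) : {set {perm T}} := [set g in G | separates g A].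

Lemma sum_card_separating (S : {set {set T}}) :
  \sum_(A in S) #|separating A| = \sum_(g in G) #|[set A in S | separates g A]|.
Proof.
rewrite (eq_bigr _ (fun A _ => card_in_set_sum _ _)) exchange_big /=.
by apply: eq_bigr => g _; rewrite card_in_set_sum.
Qed.

Lemma self_separable_card_lt (A : {set T}) : #|A| < mG G -> self_separable G A.
Proof. by apply: contraTT => not_sep; rewrite -leqNgt; apply: bigmin_leq_cond. Qed.

Lemma stab_leq_card_separating (A : {set T}) :
  self_separable G A -> #|'N_G(A | 'P)| <= #|separating A|.
Proof.
case/existsP => g0 /andP[Gg0 sepA0]; rewrite -(card_transporters A Gg0).
by apply/subset_leq_card/subsetP => g; rewrite !inE => /andP[-> /eqP gA]; rewrite /separates gA.
Qed.

Lemma separates_sub_compl g (A : {set T}) : separates g A -> [set g x | x in A] \subset ~: A.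
Proof. by rewrite /separates disjoint_sym disjoints_subset. Qed.

Lemma card_compl_half (A : {set T}) : #|A| = #|T|./2 -> #|~: A| = uphalf #|T|.
Proof. by move=> cardA; have := cardsC A; rewrite uphalf_half -{3}(odd_double_half #|T|); lia. Qed.

Lemma card_separating_even (A : {set T}) : ~~ odd #|T| -> #|A| = #|T|./2 ->
  self_separable G A -> #|separating A| = #|'N_G(A | 'P)|.
Proof.
move=> even_T cardA sepA; apply/eqP; rewrite eqn_leq stab_leq_card_separating // andbT.
have [g0 /andP[Gg0 sepA0]] := existsP sepA; rewrite -(card_transporters A Gg0).
have gA_compl g : separates g A -> [set g x | x in A] = ~: A.
  move=> sepgA; apply/eqP; rewrite eqEcard separates_sub_compl //=.
  by rewrite card_compl_half // uphalf_half (negbTE even_T) card_imset -?cardA //; apply: perm_inj.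
apply/subset_leq_card/subsetP => g; rewrite !inE => /andP[-> /gA_compl ->].
by rewrite (gA_compl g0 sepA0) eqxx.
Qed.

Lemma separates_odd_gap g (A : {set T}) : odd #|T| -> #|A| = #|T|./2 ->
  separates g A -> exists2 x, x \in ~: A & [set g y | y in A] = ~: A :\ x.
Proof.
move=> odd_T cardA sepgA; have sub_gA := separates_sub_compl sepgA.
have card_gA : #|[set g y | y in A]| = #|T|./2 by rewrite card_imset //; apply: perm_inj.
have card_compl := card_compl_half cardA; rewrite uphalf_half odd_T in card_compl.
have [x] : exists x, x \in ~: A :\: [set g y | y in A].
  by apply/card_gt0P; rewrite cardsD (setIidPr sub_gA) card_gA card_compl; lia.
rewrite in_setD => /andP[x_gA xA]; exists x => //; apply/eqP.
have := cardsD1 x (~: A); rewrite xA card_compl /= => card_compl1.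
rewrite eqEcard card_gA; apply/andP; split; last by lia.
apply/subsetP => y gAy; rewrite in_setD1 (subsetP sub_gA _ gAy) andbT.
by apply: contraNneq x_gA => <-.
Qed.

Lemma card_separating_odd_le (A : {set T}) : odd #|T| -> #|A| = #|T|./2 ->
  #|separating A| <= uphalf #|T| * #|'N_G(A | 'P)|.
Proof.
move=> odd_T cardA; rewrite card_in_set_sum -(card_compl_half cardA) -sum_nat_const.
apply: (@leq_trans (\sum_(g in G) \sum_(x in ~: A) ([set g y | y in A] == ~: A :\ x))).
  apply: leq_sum => g _; case: (boolP (separates g A)) => // sepgA.
  by have [x xA gAE] := separates_odd_gap odd_T cardA sepgA; rewrite (bigD1 x) //= gAE eqxx.
rewrite exchange_big /=; apply: leq_sum => x _.
by rewrite -card_in_set_sum card_transporters_le.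
Qed.

End SetStabilisers.

Unset Implicit Arguments.
Local Open Scope group_scope.

Theorem lemma7p3 (T : finType) (G : {group {perm T}}) :
  2 <= #|T| ->
  [transitive G, on [set: T] | 'P] ->
  mG G = uphalf (#|T|.+1) ->
  (~~ odd #|T| ->
     rG G * #|G| = \sum_(A in ksubsets T (#|T|./2)) #|'N_G(A | 'P)|
     /\ \sum_(A in ksubsets T (#|T|./2)) #|'N_G(A | 'P)|
        = \sum_(g in O_set G 0) 2 ^ ncycles g)%N
  /\
  (odd #|T| ->
     rG G * #|G| = \sum_(A in ksubsets T (#|T|./2)) #|'N_G(A | 'P)|
     /\ \sum_(A in ksubsets T (#|T|./2)) #|'N_G(A | 'P)|
        <= \sum_(g in O_set G 1) 2 ^ (ncycles g - 1) * ell g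
     /\ \sum_(g in O_set G 1) 2 ^ (ncycles g - 1) * ell g
        <= uphalf #|T| * \sum_(A in ksubsets T (#|T|./2)) #|'N_G(A | 'P)|
     /\ uphalf #|T| * \sum_(A in ksubsets T (#|T|./2)) #|'N_G(A | 'P)|
        = uphalf #|T| * (rG G * #|G|))%N.
Proof.
move=> _ _ mG_eq; set K := ksubsets T #|T|./2.
have rG_eq : (rG G * #|G| = \sum_(A in K) #|'N_G(A | 'P)|)%N by rewrite sum_card_setstab.
have cardK A : A \in K -> #|A| = #|T|./2 by rewrite inE => /eqP.
have sepK A : A \in K -> self_separable G A.
  by move=> /cardK cardA; apply: self_separable_card_lt; rewrite mG_eq cardA.
have sum_O i F :
    \sum_(g in O_set G i) F g = \sum_(g in G) (if #|odd_cycles g| <= i then F g else 0).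
  by rewrite big_set big_mkcondr.
split=> [even_T | odd_T]; split=> //.
  rewrite -(eq_bigr _ (fun A KA => card_separating_even even_T (cardK A KA) (sepK A KA))).
  rewrite sum_card_separating sum_O; apply: eq_bigr => g _.
  by rewrite card_separated_even // leqn0 cards_eq0.
have sum_O1 : (\sum_(g in O_set G 1) 2 ^ (ncycles g - 1) * ell g
                = \sum_(A in K) #|separating G A|)%N.
  by rewrite sum_card_separating sum_O; apply: eq_bigr => g _; rewrite card_separated_odd.
rewrite sum_O1 rG_eq; split; last split=> //.
  by apply: leq_sum => A KA; apply: stab_leq_card_separating; apply: sepK.
rewrite big_distrr; apply: leq_sum => A KA.
by apply: card_separating_odd_le => //; apply: cardK.
Qed.
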